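(* Let $M$ be a smooth 3-manifold with a smooth contact sub-Riemannian structure $(D,g)$, let $S\subset M$ be an embedded $C^2$ surface, and let $p\in S$ be a characteristic point. Near $p$ let $(X_1,X_2)$ be an oriented $g$-orthonormal frame of $D$ and $X_0$ a vector field transverse to $D$, and for $\varepsilon>0$ let $g^\varepsilon$ be the Riemannian metric for which $(\varepsilon X_0,X_1,X_2)$ is orthonormal. Then, as $\varepsilon\to0$, $$K^\varepsilon_{\mathrm{ext}}(p)=-\frac{3}{4\varepsilon^2}(c^0_{12}(p))^2+O(1).$$
   Context: A point $p\in S$ is characteristic if $T_pS=D_p$. The structure functions $c^k_{ij}$ are defined by $[X_j,X_i]=c^1_{ij}X_1+c^2_{ij}X_2+c^0_{ij}X_0$; $c^0_{12}$ is the $X_0$-coefficient of $[X_2,X_1]$. With $\overline\nabla^\varepsilon$ the Levi-Civita connection of $g^\varepsilon$ and $(X,Y)$ any frame of $TS$, the extrinsic curvature is $K^\varepsilon_{\mathrm{ext}}=\dfrac{\langle\overline\nabla^\varepsilon_X\overline\nabla^\varepsilon_YY-\overline\nabla^\varepsilon_Y\overline\nabla^\varepsilon_XY-\overline\nabla^\varepsilon_{[X,Y]}Y,X\rangle_{g^\varepsilon}}{|X|^2_{g^\varepsilon}|Y|^2_{g^\varepsilon}-\langle X,Y\rangle^2_{g^\varepsilon}}$ (the sectional curvature of $g^\varepsilon$ on the plane $TS$). *)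

(* Local coordinate model of the
   3-manifold: an open set U of R^3 = 'rV[R]_3. *)
From HB Require Import structures.
From mathcomp Require Import all_boot all_order all_algebra.
From mathcomp Require Import all_classical all_reals all_analysis.
Set Implicit Arguments. Unset Strict Implicit. Unset Printing Implicit Defensive.
Import Order.TTheory GRing.Theory Num.Theory.
Import numFieldNormedType.Exports.
Local Open Scope ring_scope.
Local Open Scope classical_set_scope.

Section Defs.
Variable R : realType.
Local Notation V := 'rV[R]_3.

Definition ee (a : 'I_3) : V := delta_mx 0 a.

Definition pd (a : 'I_3) (f : V -> R) : V -> R := fun x => 'D_(ee a) f x.

Fixpoint Ck (k : nat) (U : set V) (f : V -> R) : Prop :=
  match k with
  | 0 => forall x, U x -> {for x, continuous f}
  | k'.+1 => (forall x, U x -> {for x, continuous f}) /\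
             (forall a x, U x -> derivable f x (ee a)) /\
             (forall a, Ck k' U (pd a f))
  end.

Definition smooth_on (U : set V) (f : V -> R) := forall k, Ck k U f.

Definition vsmooth_on (U : set V) (X : V -> V) :=
  forall i : 'I_3, smooth_on U (fun y => X y 0 i).

Definition lie (X Y : V -> V) : V -> V := fun x =>
  \row_k \sum_(a < 3) (X x 0 a * pd a (fun y => Y y 0 k) x
                       - Y x 0 a * pd a (fun y => X y 0 k) x).

Definition frameM (X : 'I_3 -> V -> V) (x : V) : 'M[R]_3 :=
  \matrix_(i, j) X i x 0 j.

(* structure functions: [X_j, X_i] = sum_k c^k_{ij} X_k *)
Definition cstruct (X : 'I_3 -> V -> V) (k i j : 'I_3) (x : V) : R :=
  (lie (X j) (X i) x *m invmx (frameM X x)) 0 k.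

Definition frameE (X : 'I_3 -> V -> V) (eps : R) (x : V) : 'M[R]_3 :=
  \matrix_(i, j) ((if i == 0 then eps else 1) * X i x 0 j).

(* metric g^eps in coordinates: g(u,v) = u G v^T, where (eps X0, X1, X2)
   is g-orthonormal;  and its inverse *)
Definition Gm X eps x : 'M[R]_3 :=
  invmx (frameE X eps x) *m (invmx (frameE X eps x))^T.
Definition Ginv X eps x : 'M[R]_3 := (frameE X eps x)^T *m frameE X eps x.

Definition gdot X eps x (u v : V) : R := (u *m Gm X eps x *m v^T) 0 0.

Definition Gam X eps (c a b : 'I_3) (x : V) : R :=
  2^-1 * \sum_(d < 3) Ginv X eps x c d *
     (pd a (fun y => Gm X eps y b d) x + pd b (fun y => Gm X eps y a d) x
      - pd d (fun y => Gm X eps y a b) x).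

(* Riemann tensor: R(d_a,d_b) d_c = sum_d Rm d a b c d_d, where
   R(X,Y)Z = nabla_X nabla_Y Z - nabla_Y nabla_X Z - nabla_[X,Y] Z *)
Definition Rm X eps (d a b c : 'I_3) (x : V) : R :=
  pd a (Gam X eps d b c) x - pd b (Gam X eps d a c) x
  + \sum_(e < 3) (Gam X eps d a e x * Gam X eps e b c x
                  - Gam X eps d b e x * Gam X eps e a c x).

Definition Kext X eps (x u v : V) : R :=
  (\sum_(a < 3) \sum_(b < 3) \sum_(c < 3) \sum_(d < 3) \sum_(e < 3)
     u 0 a * v 0 b * v 0 c * Rm X eps d a b c x * Gm X eps x d e * u 0 e)
  / (gdot X eps x u u * gdot X eps x v v - (gdot X eps x u v) ^+ 2).

Definition C2_surface (S : set V) : Prop :=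
  forall q, S q -> exists (W : set V) (phi : V -> R),
    [/\ open W, W q, Ck 2 W phi,
        (forall x, W x -> exists a, pd a phi x != 0) &
        (forall x, W x -> (S x <-> phi x = 0))].

Definition tangent_space (S : set V) (p : V) : set V :=
  [set w | exists gam : R -> V,
     [/\ gam 0 = p, \forall t \near (0 : R), S (gam t),
         derivable gam 0 1 & 'D_1 gam 0 = w]].

Definition distr (X : 'I_3 -> V -> V) (x : V) : set V :=
  [set w | exists s t : R, w = s *: X 1 x + t *: X 2 x].

End Defs.

(* In the coordinates of the frame, g^eps = A + eps^-2 theta (x) theta, where theta is the
   coframe form annihilating D and A is the horizontal part, and its inverse is
   P + eps^2 X_0 (x) X_0.  The Christoffel symbols are therefore
   eps^-2 Gam1 + Gam0 + eps^2 GamN, and <R(u,v)v, u> is a Laurent polynomial in eps^2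
   ranging from eps^-4 to eps^4.  Now Gam1 = 1/2 P K, with K the Koszul combination of
   the derivatives of theta (x) theta; on two vectors of D = ker theta, K is a multiple
   of theta, which P annihilates.  So Gam1 vanishes on D x D; this kills the eps^-4
   coefficient, and the eps^-2 coefficient collapses to -3/4 dtheta(u,v)^2.  For u, v
   in D the Gram determinant |u|^2 |v|^2 - <u,v>^2 = det^2 does not depend on eps, and
   dtheta(u,v) = det * dtheta(X_1,X_2) = det * c^0_12, so the rest is bounded for
   0 < eps < 1. *)

From HB Require Import structures.
From mathcomp Require Import all_boot all_order all_algebra.
From mathcomp Require Import all_classical all_reals all_analysis.
From mathcomp Require Import ring.
Import Order.TTheory GRing.Theory Num.Theory.
Import numFieldNormedType.Exports.
Local Open Scope ring_scope.
Local Open Scope classical_set_scope.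
Set Implicit Arguments. Unset Strict Implicit. Unset Printing Implicit Defensive.

Lemma span_det_neq0 (K : fieldType) n (x y u v : 'rV[K]_n) (s1 t1 s2 t2 : K) :
  u = s1 *: x + t1 *: y -> v = s2 *: x + t2 *: y ->
  (forall s t : K, s *: u + t *: v = 0 -> s = 0 /\ t = 0) -> s1 * t2 - t1 * s2 != 0.
Proof.
move=> hu hv indep; apply/eqP => det0.
have comb s t : s *: u + t *: v = (s * s1 + t * s2) *: x + (s * t1 + t * t2) *: y.
  by rewrite hu hv; apply/rowP => e; rewrite !mxE; ring.
have [t2_0 /eqP] : t2 = 0 /\ - t1 = 0.
  apply: indep; rewrite comb (_ : t2 * s1 + - t1 * s2 = 0); last by rewrite -det0; ring.
  by rewrite (_ : t2 * t1 + - t1 * t2 = 0) ?scale0r ?addr0 //; ring.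
rewrite oppr_eq0 => /eqP t1_0.
have [_ /eqP] : s2 = 0 /\ - s1 = 0.
  apply: indep; rewrite comb (_ : s2 * s1 + - s1 * s2 = 0); last by ring.
  by rewrite (_ : s2 * t1 + - s1 * t2 = 0) ?scale0r ?addr0 //; rewrite -oppr0 -det0; ring.
rewrite oppr_eq0 => /eqP s1_0.
have : 1 *: u + 0 *: v = 0 by rewrite hu s1_0 t1_0 !scale0r !addr0 scaler0.
by move/indep => [/eqP]; rewrite oner_eq0.
Qed.

Lemma laurent_remainder_le (R : realFieldType) (D c n0 n1 n2 eps : R) :
  D != 0 -> 0 < eps -> eps < 1 ->
  `| ((eps ^+ 2)^-1 * (- (3 / 4) * (D * c) ^+ 2) + n0 + eps ^+ 2 * n1
       + (eps ^+ 2) ^+ 2 * n2) / D ^+ 2 + 3 / (4 * eps ^+ 2) * c ^+ 2 |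
  <= (`|n0| + `|n1| + `|n2|) / D ^+ 2.
Proof.
move=> D0 eps_gt0 eps_lt1.
have -> : ((eps ^+ 2)^-1 * (- (3 / 4) * (D * c) ^+ 2) + n0 + eps ^+ 2 * n1
    + (eps ^+ 2) ^+ 2 * n2) / D ^+ 2 + 3 / (4 * eps ^+ 2) * c ^+ 2 =
    (n0 + eps ^+ 2 * n1 + (eps ^+ 2) ^+ 2 * n2) / D ^+ 2.
  by field; rewrite D0 gt_eqF.
have D2_gt0 : 0 < D ^+ 2 by rewrite exprn_even_gt0.
have Di_ge0 : 0 <= (D ^+ 2)^-1 by rewrite invr_ge0 ltW.
rewrite normrM (ger0_norm Di_ge0) ler_pM2r ?invr_gt0 //.
have e2_ge0 : 0 <= eps ^+ 2 by rewrite sqr_ge0.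
have e2_le1 : eps ^+ 2 <= 1 by rewrite expr_le1 // ltW.
have e4_le1 : (eps ^+ 2) ^+ 2 <= 1 by rewrite expr_le1.
rewrite (le_trans (ler_normD _ _)) // lerD //; last first.
  by rewrite normrM (ger0_norm (exprn_ge0 2 e2_ge0)); apply: ler_piMl.
rewrite (le_trans (ler_normD _ _)) // lerD // normrM ger0_norm //.
exact: ler_piMl.
Qed.

Section IndexAlgebra.
Variable R : numFieldType.

Lemma sum3E (F : 'I_3 -> R) : \sum_(i < 3) F i = F 0 + F 1 + F 2.
Proof. by rewrite !big_ord_recr big_ord0 /= add0r; congr (F _ + F _ + F _); exact: val_inj. Qed.

Definition dot (x y : 'I_3 -> R) := \sum_(i < 3) x i * y i.

Definition bform (M : 'I_3 -> 'I_3 -> R) (x y : 'I_3 -> R) :=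
  \sum_(a < 3) \sum_(c < 3) x a * y c * M a c.

Definition koszul (D : 'I_3 -> 'I_3 -> 'I_3 -> R) (a b f : 'I_3) := D a b f + D b a f - D f a b.

(* [Rm] is convertible to [riem_lin dGam + quad Gam Gam], with [dGam x] the
   partial derivatives of [Gam]. *)
Definition riem_lin (dG : 'I_3 -> 'I_3 -> 'I_3 -> 'I_3 -> R) (d a b c : 'I_3) :=
  dG a d b c - dG b d a c.

Definition quad (A B : 'I_3 -> 'I_3 -> 'I_3 -> R) (d a b c : 'I_3) :=
  \sum_(e < 3) (A d a e * B e b c - A d b e * B e a c).

Lemma riem_laurent (s t : R) (G1 G0 Gn : 'I_3 -> 'I_3 -> 'I_3 -> R)
    (dG1 dG0 dGn : 'I_3 -> 'I_3 -> 'I_3 -> 'I_3 -> R) d a b c :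
  s * t = 1 ->
  let G c a b := s * G1 c a b + G0 c a b + t * Gn c a b in
  let dG x c a b := s * dG1 x c a b + dG0 x c a b + t * dGn x c a b in
  riem_lin dG d a b c + quad G G d a b c =
    s ^+ 2 * quad G1 G1 d a b c
    + s * (riem_lin dG1 d a b c + quad G1 G0 d a b c + quad G0 G1 d a b c)
    + (riem_lin dG0 d a b c + quad G0 G0 d a b c + quad G1 Gn d a b c + quad Gn G1 d a b c)
    + t * (riem_lin dGn d a b c + quad G0 Gn d a b c + quad Gn G0 d a b c)
    + t ^+ 2 * quad Gn Gn d a b c.
Proof.
(* Using [s * t = 1], the [s * t] cross terms go to the constant coefficient. *)
move=> st G dG; rewrite -[quad G1 Gn _ _ _ _]mul1r -[quad Gn G1 _ _ _ _]mul1r -st.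
by rewrite /G /dG /riem_lin /quad !sum3E; ring.
Qed.

End IndexAlgebra.

Section Contractions.
Variable R : numFieldType.
Variables (u v w : 'I_3 -> R).

Definition curv_form (F : 'I_3 -> 'I_3 -> 'I_3 -> 'I_3 -> R) :=
  \sum_(a < 3) \sum_(b < 3) \sum_(c < 3) \sum_(d < 3) u a * v b * v c * F d a b c * w d.

Lemma curv_formD F G :
  curv_form (fun d a b c => F d a b c + G d a b c) = curv_form F + curv_form G.
Proof.
rewrite /curv_form -big_split; apply: eq_bigr => a _; rewrite -big_split.
apply: eq_bigr => b _; rewrite -big_split; apply: eq_bigr => c _; rewrite -big_split.
by apply: eq_bigr => d _; rewrite mulrDr mulrDl.
Qed.

Lemma curv_formZ k F : curv_form (fun d a b c => k * F d a b c) = k * curv_form F.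
Proof.
rewrite /curv_form mulr_sumr; apply: eq_bigr => a _; rewrite mulr_sumr.
apply: eq_bigr => b _; rewrite mulr_sumr; apply: eq_bigr => c _; rewrite mulr_sumr.
by apply: eq_bigr => d _; rewrite mulrCA !mulrA.
Qed.

Lemma curv_form_laurent (s t : R) F2 F1 F0 Fn1 Fn2 :
  curv_form (fun d a b c => s ^+ 2 * F2 d a b c + s * F1 d a b c + F0 d a b c
                           + t * Fn1 d a b c + t ^+ 2 * Fn2 d a b c) =
  s ^+ 2 * curv_form F2 + s * curv_form F1 + curv_form F0 + t * curv_form Fn1
  + t ^+ 2 * curv_form Fn2.
Proof. by rewrite !curv_formD !curv_formZ. Qed.

Definition bilin (B : 'I_3 -> 'I_3 -> 'I_3 -> R) (x y : 'I_3 -> R) (e : 'I_3) :=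
  \sum_(a < 3) \sum_(b < 3) x a * y b * B e a b.

Definition wform (A : 'I_3 -> 'I_3 -> 'I_3 -> R) (x : 'I_3 -> R) (e : 'I_3) :=
  \sum_(a < 3) \sum_(d < 3) x a * w d * A d a e.

Lemma sum4_mul_sum (x y z : 'I_3 -> R) (A B : 'I_3 -> 'I_3 -> 'I_3 -> R) :
  \sum_(a < 3) \sum_(b < 3) \sum_(c < 3) \sum_(d < 3)
    x a * y b * z c * (\sum_(e < 3) A d a e * B e b c) * w d =
  \sum_(e < 3) wform A x e * bilin B y z e.
Proof. by rewrite /wform /bilin !sum3E; ring. Qed.

Lemma curv_form_quad A B : curv_form (quad A B) =
  \sum_(e < 3) wform A u e * bilin B v v e - \sum_(e < 3) wform A v e * bilin B u v e.
Proof.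
rewrite /curv_form /quad -!sum4_mul_sum.
under eq_bigr => a _ do under eq_bigr => b _ do under eq_bigr => c _ do
  (under eq_bigr => d _ do rewrite sumrB mulrBr mulrBl; rewrite sumrB).
under eq_bigr => a _ do under eq_bigr => b _ do rewrite sumrB.
under eq_bigr => a _ do rewrite sumrB.
rewrite sumrB; congr (_ - _); rewrite exchange_big; apply: eq_bigr => b _.
apply: eq_bigr => a _; apply: eq_bigr => c _; apply: eq_bigr => d _.
by congr (_ * _ * _ * _); exact: mulrC.
Qed.

Lemma curv_form_riem_lin dG : curv_form (riem_lin dG) =
  \sum_(a < 3) \sum_(b < 3) \sum_(c < 3) \sum_(d < 3) u a * v b * v c * dG a d b c * w d
  - \sum_(b < 3) \sum_(a < 3) \sum_(c < 3) \sum_(d < 3) u a * v b * v c * dG b d a c * w d.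
Proof.
rewrite /curv_form /riem_lin.
under eq_bigr => a _ do under eq_bigr => b _ do under eq_bigr => c _ do
  (under eq_bigr => d _ do rewrite mulrBr mulrBl; rewrite sumrB).
under eq_bigr => a _ do under eq_bigr => b _ do rewrite sumrB.
under eq_bigr => a _ do rewrite sumrB.
by rewrite sumrB; congr (_ - _); exact: exchange_big.
Qed.

End Contractions.

(* Values at a point: [th] is theta, [dth a c] and [ddth x a c] its first and second
   partial derivatives, [P] = X_1 (x) X_1 + X_2 (x) X_2 with derivatives [dP], [G1] and
   [G0] the eps^-2 and eps^0 coefficients of the Christoffel symbols with [dG1 x] the
   derivatives of [G1], and [w] the lowering of [u]; [dB], [ddB] are the first and
   second derivatives of theta (x) theta. *)
Section LeadingCurvatureTerms.
Variable R : numFieldType.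
Variables (th X0 u v w : 'I_3 -> R) (dth P : 'I_3 -> 'I_3 -> R).
Variables (ddth dP G1 G0 : 'I_3 -> 'I_3 -> 'I_3 -> R).
Variable dG1 : 'I_3 -> 'I_3 -> 'I_3 -> 'I_3 -> R.

Definition dB (x b f : 'I_3) := dth x b * th f + th b * dth x f.
Definition ddB (x a b f : 'I_3) :=
  ddth x a b * th f + dth a b * dth x f + dth x b * dth a f + th b * ddth x a f.

Hypothesis G1E : forall c a b, G1 c a b = 2^-1 * \sum_(f < 3) P c f * koszul dB a b f.
Hypothesis dG1E : forall x c a b, dG1 x c a b =
  2^-1 * \sum_(f < 3) (dP x c f * koszul dB a b f + P c f * koszul (ddB x) a b f).
Hypothesis thG0E : forall a b,
  \sum_(e < 3) th e * G0 e a b = 2^-1 * \sum_(f < 3) X0 f * koszul dB a b f.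
Hypothesis th_u : dot th u = 0.
Hypothesis th_v : dot th v = 0.
Hypothesis P_th : forall c, \sum_(f < 3) P c f * th f = 0.
Hypothesis dP_th : forall x c,
  \sum_(f < 3) dP x c f * th f = - \sum_(f < 3) P c f * dth x f.
Hypothesis w_P : forall f, \sum_(d < 3) w d * P d f = u f.
Hypothesis X0_th : dot X0 th = 1.

Lemma koszul_dB_ker x y : dot th x = 0 -> dot th y = 0 -> forall f,
  \sum_(a < 3) \sum_(b < 3) x a * y b * koszul dB a b f = (bform dth x y + bform dth y x) * th f.
Proof.
move=> thx thy f.
have -> : \sum_(a < 3) \sum_(b < 3) x a * y b * koszul dB a b f =
    (bform dth x y + bform dth y x) * th f
  + dot th y * (\sum_(a < 3) x a * (dth a f - dth f a))
  + dot th x * (\sum_(b < 3) y b * (dth b f - dth f b)).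
  by rewrite /dot /bform /koszul /dB !sum3E; ring.
by rewrite thx thy; ring.
Qed.

Lemma bilin_G1_ker x y : dot th x = 0 -> dot th y = 0 -> forall e, bilin G1 x y e = 0.
Proof.
move=> thx thy e.
have -> : bilin G1 x y e =
    2^-1 * \sum_(f < 3) P e f * (\sum_(a < 3) \sum_(b < 3) x a * y b * koszul dB a b f).
  by rewrite /bilin !sum3E !G1E !sum3E; ring.
under eq_bigr => f _ do rewrite koszul_dB_ker // mulrCA.
by rewrite -mulr_sumr P_th !mulr0.
Qed.

Lemma wform_G1 x e :
  wform w G1 x e = 2^-1 * \sum_(a < 3) \sum_(f < 3) x a * u f * koszul dB a e f.
Proof.
have -> : wform w G1 x e =
    2^-1 * \sum_(a < 3) \sum_(f < 3) x a * (\sum_(d < 3) w d * P d f) * koszul dB a e f.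
  by rewrite /wform !sum3E !G1E !sum3E; ring.
by under eq_bigr => a _ do under eq_bigr => f _ do rewrite w_P.
Qed.

Lemma curv_form_quad_G1 A : curv_form u v w (quad A G1) = 0.
Proof.
rewrite curv_form_quad.
under eq_bigr => e _ do rewrite bilin_G1_ker // mulr0.
under [X in _ - X]eq_bigr => e _ do rewrite bilin_G1_ker // mulr0.
by rewrite subrr.
Qed.

Lemma curv_form_quad_G1_G0 : curv_form u v w (quad G1 G0) =
  4^-1 * (bform dth u v - bform dth v u) * (bform dth u v + bform dth v u).
Proof.
rewrite curv_form_quad.
have wG1u e : wform w G1 u e = 0.
  rewrite wform_G1 -[RHS](mulr0 2^-1); congr (_ * _).
  have -> : \sum_(a < 3) \sum_(f < 3) u a * u f * koszul dB a e f =
      2 * dot th u * \sum_(a < 3) u a * dth e a.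
    by rewrite /dot /koszul /dB !sum3E; ring.
  by rewrite th_u mulr0 mul0r.
have wG1v e : wform w G1 v e = 2^-1 * (bform dth v u - bform dth u v) * th e.
  rewrite wform_G1 -mulrA; congr (_ * _).
  have -> : \sum_(b < 3) \sum_(f < 3) v b * u f * koszul dB b e f =
      (bform dth v u - bform dth u v) * th e
      + dot th u * (\sum_(b < 3) v b * (dth b e + dth e b))
      + dot th v * (\sum_(f < 3) u f * (dth e f - dth f e)).
    by rewrite /dot /koszul /dB /bform !sum3E; ring.
  by rewrite th_u th_v !mul0r !addr0.
have thG0uv : \sum_(e < 3) th e * bilin G0 u v e = 2^-1 * (bform dth u v + bform dth v u).
  have -> : \sum_(e < 3) th e * bilin G0 u v e =
      \sum_(a < 3) \sum_(c < 3) u a * v c * (\sum_(e < 3) th e * G0 e a c).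
    by rewrite /bilin !sum3E; ring.
  under eq_bigr => a _ do under eq_bigr => c _ do rewrite thG0E.
  have -> : \sum_(a < 3) \sum_(c < 3) u a * v c *
        (2^-1 * \sum_(f < 3) X0 f * koszul dB a c f) =
      2^-1 * \sum_(f < 3) X0 f * (\sum_(a < 3) \sum_(c < 3) u a * v c * koszul dB a c f).
    by rewrite !sum3E; ring.
  under eq_bigr => f _ do rewrite koszul_dB_ker // mulrCA.
  by rewrite -mulr_sumr -/(dot X0 th) X0_th mulr1.
rewrite big1 => [|e _]; last by rewrite wG1u mul0r.
have -> : \sum_(e < 3) wform w G1 v e * bilin G0 u v e =
    2^-1 * (bform dth v u - bform dth u v) * \sum_(e < 3) th e * bilin G0 u v e.
  by rewrite mulr_sumr; apply: eq_bigr => e _; rewrite wG1v mulrA.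
rewrite thG0uv -[4]/(2 * 2)%:R natrM invfM; ring.
Qed.

Definition form3 (x y z : 'I_3 -> R) :=
  \sum_(i < 3) \sum_(j < 3) \sum_(k < 3) x i * y j * z k * ddth i j k.

Lemma koszul_ddB_uvvu :
  \sum_(a < 3) \sum_(b < 3) \sum_(c < 3) \sum_(f < 3) u a * v b * v c * u f * koszul (ddB a) b c f =
  2 * bform dth v v * bform dth u u + 2 * bform dth u v * bform dth v u - 2 * bform dth u v ^+ 2.
Proof.
have -> : \sum_(a < 3) \sum_(b < 3) \sum_(c < 3) \sum_(f < 3)
    u a * v b * v c * u f * koszul (ddB a) b c f =
  2 * bform dth v v * bform dth u u + 2 * bform dth u v * bform dth v u - 2 * bform dth u v ^+ 2
  + dot th u * (2 * form3 u v v) + dot th v * (2 * form3 u v u - 2 * form3 u u v).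
  by rewrite /koszul /ddB /form3 /bform /dot !sum3E; ring.
by rewrite th_u th_v !mul0r !addr0.
Qed.

Lemma koszul_ddB_vuvu :
  \sum_(b < 3) \sum_(a < 3) \sum_(c < 3) \sum_(f < 3) u a * v b * v c * u f * koszul (ddB b) a c f =
  2 * bform dth v u ^+ 2.
Proof.
have -> : \sum_(b < 3) \sum_(a < 3) \sum_(c < 3) \sum_(f < 3)
    u a * v b * v c * u f * koszul (ddB b) a c f =
  2 * bform dth v u ^+ 2 + dot th u * (2 * form3 v v u).
  by rewrite /koszul /ddB /form3 /bform /dot !sum3E; ring.
by rewrite th_u mul0r addr0.
Qed.

Lemma w_dP_th x : \sum_(a < 3) x a * \sum_(d < 3) w d * (\sum_(f < 3) dP a d f * th f) =
  - bform dth x u.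
Proof.
under eq_bigr => a _ do under eq_bigr => d _ do rewrite dP_th.
have -> : \sum_(a < 3) x a * \sum_(d < 3) w d * - \sum_(f < 3) P d f * dth a f =
    - \sum_(a < 3) \sum_(f < 3) x a * (\sum_(d < 3) w d * P d f) * dth a f.
  by rewrite !sum3E; ring.
by under eq_bigr => a _ do under eq_bigr => f _ do rewrite w_P.
Qed.

Lemma curv_form_dG1_first :
  \sum_(a < 3) \sum_(b < 3) \sum_(c < 3) \sum_(d < 3) u a * v b * v c * dG1 a d b c * w d =
  bform dth u v * bform dth v u - bform dth u v ^+ 2.
Proof.
have -> : \sum_(a < 3) \sum_(b < 3) \sum_(c < 3) \sum_(d < 3) u a * v b * v c * dG1 a d b c * w d
  = 2^-1 * \sum_(a < 3) \sum_(f < 3) u a * (\sum_(d < 3) w d * dP a d f) *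
      (\sum_(b < 3) \sum_(c < 3) v b * v c * koszul dB b c f)
  + 2^-1 * \sum_(a < 3) \sum_(b < 3) \sum_(c < 3) \sum_(f < 3)
      u a * v b * v c * (\sum_(d < 3) w d * P d f) * koszul (ddB a) b c f.
  rewrite !mulr_sumr -big_split; apply: eq_bigr => a _ /=.
  by rewrite !sum3E !dG1E !sum3E; ring.
under eq_bigr => a _ do under eq_bigr => f _ do rewrite koszul_dB_ker //.
under [X in _ + 2^-1 * X]eq_bigr => a _ do under eq_bigr => b _ do
  under eq_bigr => c _ do under eq_bigr => f _ do rewrite w_P.
rewrite koszul_ddB_uvvu.
have -> : \sum_(a < 3) \sum_(f < 3) u a * (\sum_(d < 3) w d * dP a d f) *
      ((bform dth v v + bform dth v v) * th f) =
    (bform dth v v + bform dth v v) *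
      \sum_(a < 3) u a * \sum_(d < 3) w d * (\sum_(f < 3) dP a d f * th f).
  by rewrite !sum3E; ring.
by rewrite w_dP_th; field.
Qed.

Lemma curv_form_dG1_second :
  \sum_(b < 3) \sum_(a < 3) \sum_(c < 3) \sum_(d < 3) u a * v b * v c * dG1 b d a c * w d =
  - 2^-1 * (bform dth u v * bform dth v u) + 2^-1 * bform dth v u ^+ 2.
Proof.
have -> : \sum_(b < 3) \sum_(a < 3) \sum_(c < 3) \sum_(d < 3) u a * v b * v c * dG1 b d a c * w d
  = 2^-1 * \sum_(b < 3) \sum_(f < 3) v b * (\sum_(d < 3) w d * dP b d f) *
      (\sum_(a < 3) \sum_(c < 3) u a * v c * koszul dB a c f)
  + 2^-1 * \sum_(b < 3) \sum_(a < 3) \sum_(c < 3) \sum_(f < 3)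
      u a * v b * v c * (\sum_(d < 3) w d * P d f) * koszul (ddB b) a c f.
  rewrite !mulr_sumr -big_split; apply: eq_bigr => b _ /=.
  by rewrite !sum3E !dG1E !sum3E; ring.
under eq_bigr => a _ do under eq_bigr => f _ do rewrite koszul_dB_ker //.
under [X in _ + 2^-1 * X]eq_bigr => a _ do under eq_bigr => b _ do
  under eq_bigr => c _ do under eq_bigr => f _ do rewrite w_P.
rewrite koszul_ddB_vuvu.
have -> : \sum_(b < 3) \sum_(f < 3) v b * (\sum_(d < 3) w d * dP b d f) *
      ((bform dth u v + bform dth v u) * th f) =
    (bform dth u v + bform dth v u) *
      \sum_(b < 3) v b * \sum_(d < 3) w d * (\sum_(f < 3) dP b d f * th f).
  by rewrite !sum3E; ring.
by rewrite w_dP_th; field.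
Qed.

Lemma curv_form_riem1 : curv_form u v w
    (fun d a b c => riem_lin dG1 d a b c + quad G1 G0 d a b c + quad G0 G1 d a b c) =
  - (3 / 4) * (bform dth u v - bform dth v u) ^+ 2.
Proof.
rewrite 2!curv_formD curv_form_riem_lin curv_form_dG1_first curv_form_dG1_second.
by rewrite curv_form_quad_G1_G0 curv_form_quad_G1 -[4]/(2 * 2)%:R natrM; field.
Qed.

End LeadingCurvatureTerms.

Lemma bform_alt_span (R : numFieldType) (D : 'I_3 -> 'I_3 -> R) (X1 X2 x y : 'I_3 -> R)
    (a1 b1 a2 b2 : R) :
  (forall e, x e = a1 * X1 e + b1 * X2 e) -> (forall e, y e = a2 * X1 e + b2 * X2 e) ->
  bform D x y - bform D y x = (a1 * b2 - b1 * a2) * (bform D X1 X2 - bform D X2 X1).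
Proof. by move=> hx hy; rewrite /bform !sum3E !hx !hy; ring. Qed.

Section FrameAlgebra.
Variable R : numFieldType.
Variables (X H : 'I_3 -> 'I_3 -> R).
Hypothesis XH : forall i j, dot (X i) (H j) = (i == j)%:R.

Definition hcomet (c d : 'I_3) := X 1 c * X 1 d + X 2 c * X 2 d.
Definition hmet (b d : 'I_3) := H 1 b * H 1 d + H 2 b * H 2 d.

Lemma hcomet_H0 c : \sum_(f < 3) hcomet c f * H 0 f = 0.
Proof.
have -> : \sum_(f < 3) hcomet c f * H 0 f = X 1 c * dot (X 1) (H 0) + X 2 c * dot (X 2) (H 0).
  by rewrite /hcomet /dot !sum3E; ring.
by rewrite !XH /=; ring.
Qed.

Lemma H0_hcomet_X0 (LA LB : 'I_3 -> R) :
  \sum_(e < 3) H 0 e * (2^-1 * \sum_(d < 3) (hcomet e d * LA d + X 0 e * X 0 d * LB d)) =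
  2^-1 * \sum_(d < 3) X 0 d * LB d.
Proof.
have -> : \sum_(e < 3) H 0 e * (2^-1 * \sum_(d < 3) (hcomet e d * LA d + X 0 e * X 0 d * LB d)) =
    2^-1 * \sum_(d < 3) ((dot (X 1) (H 0) * X 1 d + dot (X 2) (H 0) * X 2 d) * LA d
                         + dot (X 0) (H 0) * X 0 d * LB d).
  by rewrite /hcomet /dot !sum3E; ring.
by rewrite !XH /=; congr (_ * _); apply: eq_bigr => d _; ring.
Qed.

Lemma hcomet_derivative_H0 (Dx dX1 dX2 : 'I_3 -> R) c :
  \sum_(f < 3) (X 1 f * Dx f + H 0 f * dX1 f) = 0 ->
  \sum_(f < 3) (X 2 f * Dx f + H 0 f * dX2 f) = 0 ->
  \sum_(f < 3) ((X 1 c * dX1 f + X 1 f * dX1 c) + (X 2 c * dX2 f + X 2 f * dX2 c)) * H 0 f =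
  - \sum_(f < 3) hcomet c f * Dx f.
Proof.
move=> d1 d2.
have -> : \sum_(f < 3) ((X 1 c * dX1 f + X 1 f * dX1 c) + (X 2 c * dX2 f + X 2 f * dX2 c)) * H 0 f
  = - \sum_(f < 3) hcomet c f * Dx f
    + X 1 c * \sum_(f < 3) (X 1 f * Dx f + H 0 f * dX1 f) + dX1 c * dot (X 1) (H 0)
    + X 2 c * \sum_(f < 3) (X 2 f * Dx f + H 0 f * dX2 f) + dX2 c * dot (X 2) (H 0).
  by rewrite /hcomet /dot !sum3E; ring.
by rewrite d1 d2 !XH /=; ring.
Qed.

Lemma bracket_H0 (D dX1 dX2 : 'I_3 -> 'I_3 -> R) :
  (forall a, \sum_(f < 3) (X 1 f * D a f + H 0 f * dX1 a f) = 0) ->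
  (forall a, \sum_(f < 3) (X 2 f * D a f + H 0 f * dX2 a f) = 0) ->
  \sum_(k < 3) (\sum_(a < 3) (X 2 a * dX1 a k - X 1 a * dX2 a k)) * H 0 k =
  bform D (X 1) (X 2) - bform D (X 2) (X 1).
Proof.
move=> d1 d2.
have -> : \sum_(k < 3) (\sum_(a < 3) (X 2 a * dX1 a k - X 1 a * dX2 a k)) * H 0 k
  = bform D (X 1) (X 2) - bform D (X 2) (X 1)
    + \sum_(a < 3) X 2 a * (\sum_(f < 3) (X 1 f * D a f + H 0 f * dX1 a f))
    - \sum_(a < 3) X 1 a * (\sum_(f < 3) (X 2 f * D a f + H 0 f * dX2 a f)).
  by rewrite /bform !sum3E; ring.
by rewrite !big1 => [|a _|a _]; rewrite ?d1 ?d2 ?mulr0 //; ring.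
Qed.

Variables (u v : 'I_3 -> R) (s1 t1 s2 t2 : R).
Hypothesis u_span : forall e, u e = s1 * X 1 e + t1 * X 2 e.
Hypothesis v_span : forall e, v e = s2 * X 1 e + t2 * X 2 e.

Lemma H0_span : dot (H 0) u = 0.
Proof.
have -> : dot (H 0) u = s1 * dot (X 1) (H 0) + t1 * dot (X 2) (H 0).
  by rewrite /dot !sum3E !u_span; ring.
by rewrite !XH /=; ring.
Qed.

Lemma hmet_hcomet_span f :
  \sum_(d < 3) (\sum_(e < 3) hmet d e * u e) * hcomet d f = u f.
Proof.
have -> : \sum_(d < 3) (\sum_(e < 3) hmet d e * u e) * hcomet d f
  = (s1 * dot (X 1) (H 1) + t1 * dot (X 2) (H 1)) * (dot (X 1) (H 1) * X 1 f + dot (X 2) (H 1) * X 2 f)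
  + (s1 * dot (X 1) (H 2) + t1 * dot (X 2) (H 2)) * (dot (X 1) (H 2) * X 1 f + dot (X 2) (H 2) * X 2 f).
  by rewrite /hmet /hcomet /dot !sum3E !u_span; ring.
by rewrite !XH u_span /=; ring.
Qed.

Lemma hmet_span (k : R) :
  \sum_(i < 3) (\sum_(j < 3) u j * (hmet j i + k * (H 0 j * H 0 i))) * v i =
  s1 * s2 + t1 * t2.
Proof.
have -> : \sum_(i < 3) (\sum_(j < 3) u j * (hmet j i + k * (H 0 j * H 0 i))) * v i
  = (s1 * dot (X 1) (H 1) + t1 * dot (X 2) (H 1)) * (s2 * dot (X 1) (H 1) + t2 * dot (X 2) (H 1))
  + (s1 * dot (X 1) (H 2) + t1 * dot (X 2) (H 2)) * (s2 * dot (X 1) (H 2) + t2 * dot (X 2) (H 2))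
  + k * (s1 * dot (X 1) (H 0) + t1 * dot (X 2) (H 0)) * (s2 * dot (X 1) (H 0) + t2 * dot (X 2) (H 0)).
  by rewrite /hmet /dot !sum3E !u_span !v_span; ring.
by rewrite !XH /=; ring.
Qed.

End FrameAlgebra.

Section Calculus.
Variables (R : realType) (U : set 'rV[R]_3).
Hypothesis oU : open U.
Local Notation V := 'rV[R]_3.

Lemma near_eq_on (f g : V -> R) x : U x -> (forall y, U y -> f y = g y) ->
  \forall y \near x, f y = g y.
Proof. by move=> Ux fg; apply: filterS (open_nbhs_nbhs (conj oU Ux)). Qed.

Lemma continuous_eq_on (f g : V -> R) x : U x -> (forall y, U y -> f y = g y) ->
  {for x, continuous f} -> {for x, continuous g}.
Proof.
move=> Ux fg cf; rewrite /prop_for /continuous_at -(fg x Ux).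
exact: cvg_trans (near_eq_cvg (near_eq_on Ux fg)) cf.
Qed.

Lemma pd_eq_on (a : 'I_3) (f g : V -> R) x : U x -> (forall y, U y -> f y = g y) ->
  pd a f x = pd a g x.
Proof. by move=> Ux fg; apply: near_eq_derive; exact: near_eq_on. Qed.

Lemma Ck_eq_on k (f g : V -> R) : Ck k U f -> (forall y, U y -> f y = g y) -> Ck k U g.
Proof.
elim: k f g => [|k IH] f g /=.
  by move=> cf fg x Ux; exact: continuous_eq_on fg (cf x Ux).
move=> [cf [df hf]] fg; split; [|split].
- by move=> x Ux; exact: continuous_eq_on fg (cf x Ux).
- by move=> a x Ux; exact: near_eq_derivable (near_eq_on Ux fg) (df a x Ux).
- by move=> a; apply: IH (hf a) _ => x Ux; exact: pd_eq_on.
Qed.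

Lemma Ck_pred k (f : V -> R) : Ck k.+1 U f -> Ck k U f.
Proof. by elim: k f => [|k IH] f /= [cf [df hf]] //; split=> //; split=> // a; exact: IH. Qed.

Lemma Ck_cst k (c : R) : Ck k U (fun=> c).
Proof.
elim: k c => [|k IH] c /=; first by move=> x _; exact: cst_continuous.
split; [by move=> x _; exact: cst_continuous|split; first by move=> *; exact: derivable_cst].
by move=> a; apply: Ck_eq_on (IH 0) _ => x _; rewrite /pd derive_cst.
Qed.

Lemma CkD k (f g : V -> R) : Ck k U f -> Ck k U g -> Ck k U (fun x => f x + g x).
Proof.
elim: k f g => [|k IH] f g /=; first by move=> cf cg x Ux; exact: continuousD (cf x Ux) (cg x Ux).
move=> [cf [df hf]] [cg [dg hg]]; split; [|split].
- by move=> x Ux; exact: continuousD (cf x Ux) (cg x Ux).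
- by move=> a x Ux; exact: derivableD (df a x Ux) (dg a x Ux).
- move=> a; apply: Ck_eq_on (IH _ _ (hf a) (hg a)) _ => x Ux.
  by rewrite /pd (deriveD (df a x Ux) (dg a x Ux)).
Qed.

Lemma CkN k (f : V -> R) : Ck k U f -> Ck k U (fun x => - f x).
Proof.
elim: k f => [|k IH] f /=; first by move=> cf x Ux; exact: continuousN (cf x Ux).
move=> [cf [df hf]]; split; [|split].
- by move=> x Ux; exact: continuousN (cf x Ux).
- by move=> a x Ux; exact: derivableN (df a x Ux).
- move=> a; apply: Ck_eq_on (IH _ (hf a)) _ => x Ux.
  by rewrite /pd (deriveN (df a x Ux)).
Qed.

Lemma CkM k (f g : V -> R) : Ck k U f -> Ck k U g -> Ck k U (fun x => f x * g x).
Proof.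
elim: k f g => [|k IH] f g /=; first by move=> cf cg x Ux; exact: continuousM (cf x Ux) (cg x Ux).
move=> [cf [df hf]] [cg [dg hg]]; split; [|split].
- by move=> x Ux; exact: continuousM (cf x Ux) (cg x Ux).
- by move=> a x Ux; exact: derivableM (df a x Ux) (dg a x Ux).
- move=> a; have Cf : Ck k U f by apply: Ck_pred.
  have Cg : Ck k U g by apply: Ck_pred.
  apply: Ck_eq_on (CkD (IH _ _ Cf (hg a)) (IH _ _ Cg (hf a))) _ => x Ux.
  by rewrite /pd (deriveM (df a x Ux) (dg a x Ux)).
Qed.

Lemma CkV k (f : V -> R) : (forall x, U x -> f x != 0) ->
  Ck k U f -> Ck k U (fun x => (f x)^-1).
Proof.
move=> f0; elim: k f f0 => [|k IH] f f0 /=.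
  by move=> cf x Ux; exact: continuousV (f0 x Ux) (cf x Ux).
move=> [cf [df hf]]; split; [|split].
- by move=> x Ux; exact: continuousV (f0 x Ux) (cf x Ux).
- by move=> a x Ux; exact: derivableV (f0 x Ux) (df a x Ux).
- move=> a; have Cfi : Ck k U (fun x => (f x)^-1) by apply: IH f0 _; apply: Ck_pred.
  apply: Ck_eq_on (CkM (CkN (CkM Cfi Cfi)) (hf a)) _ => x Ux.
  by rewrite /pd (deriveV (f0 x Ux) (df a x Ux)) /= expr2 invfM.
Qed.

Lemma smooth_on_eq (f g : V -> R) : smooth_on U f -> (forall y, U y -> f y = g y) ->
  smooth_on U g.
Proof. by move=> sf fg k; exact: Ck_eq_on (sf k) fg. Qed.

Lemma smooth_on_pd (a : 'I_3) (f : V -> R) : smooth_on U f -> smooth_on U (pd a f).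
Proof. by move=> sf k; have /= [_ [_]] := sf k.+1; apply. Qed.

Lemma smooth_on_derivable (a : 'I_3) (f : V -> R) x : smooth_on U f -> U x ->
  derivable f x (ee R a).
Proof. by move=> sf Ux; have /= [_ [df _]] := sf 1%N; exact: df. Qed.

Lemma smooth_on_cst (c : R) : smooth_on U (fun=> c).
Proof. by move=> k; exact: Ck_cst. Qed.

Lemma smooth_onD (f g : V -> R) : smooth_on U f -> smooth_on U g ->
  smooth_on U (fun x => f x + g x).
Proof. by move=> sf sg k; exact: CkD. Qed.

Lemma smooth_onB (f g : V -> R) : smooth_on U f -> smooth_on U g ->
  smooth_on U (fun x => f x - g x).
Proof. by move=> sf sg k; exact: CkD (sf k) (CkN (sg k)). Qed.

Lemma smooth_onM (f g : V -> R) : smooth_on U f -> smooth_on U g ->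
  smooth_on U (fun x => f x * g x).
Proof. by move=> sf sg k; exact: CkM. Qed.

Lemma smooth_onV (f : V -> R) : (forall x, U x -> f x != 0) -> smooth_on U f ->
  smooth_on U (fun x => (f x)^-1).
Proof. by move=> f0 sf k; exact: CkV. Qed.

Lemma smooth_on_big (op : R -> R -> R) (idx : R) (I : Type) (r : seq I) (P : pred I)
    (F : I -> V -> R) :
  (forall f g, smooth_on U f -> smooth_on U g -> smooth_on U (fun x => op (f x) (g x))) ->
  (forall i, P i -> smooth_on U (F i)) ->
  smooth_on U (fun x => \big[op/idx]_(i <- r | P i) F i x).
Proof.
move=> sop sF; elim: r => [|i r IH].
  by apply: smooth_on_eq (smooth_on_cst idx) _ => x _; rewrite big_nil.
case Pi: (P i).
  by apply: smooth_on_eq (sop _ _ (sF i Pi) IH) _ => x _; rewrite big_cons Pi.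
by apply: smooth_on_eq IH _ => x _; rewrite big_cons Pi.
Qed.

Lemma smooth_on_det n (M : V -> 'M[R]_n) :
  (forall i j, smooth_on U (fun x => M x i j)) -> smooth_on U (fun x => \det (M x)).
Proof.
move=> sM; apply: smooth_on_big => [f g|s _]; first exact: smooth_onD.
apply: smooth_onM; first exact: smooth_on_cst.
by apply: smooth_on_big => [f g|i _]; [exact: smooth_onM|exact: sM].
Qed.

Lemma smooth_on_invmx n (M : V -> 'M[R]_n) : (forall x, U x -> M x \in unitmx) ->
  (forall i j, smooth_on U (fun x => M x i j)) ->
  forall i j, smooth_on U (fun x => invmx (M x) i j).
Proof.
move=> uM sM i j.
have det0 x : U x -> \det (M x) != 0 by move=> Ux; rewrite -unitfE -unitmxE uM.
have sC : smooth_on U (fun x => cofactor (M x) j i).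
  apply: smooth_onM; first exact: smooth_on_cst.
  apply: smooth_on_det => k l; apply: smooth_on_eq (sM (lift j k) (lift i l)) _.
  by move=> x _; rewrite !mxE.
apply: smooth_on_eq (smooth_onM (smooth_onV det0 (smooth_on_det sM)) sC) _.
by move=> x Ux; rewrite /invmx uM // !mxE.
Qed.

Section PartialDerivatives.
Implicit Types (a : 'I_3) (f g : V -> R) (x : V).

Lemma pdD a f g x : derivable f x (ee R a) -> derivable g x (ee R a) ->
  pd a (fun y => f y + g y) x = pd a f x + pd a g x.
Proof. exact: deriveD. Qed.

Lemma pdB a f g x : derivable f x (ee R a) -> derivable g x (ee R a) ->
  pd a (fun y => f y - g y) x = pd a f x - pd a g x.
Proof. exact: deriveB. Qed.

Lemma pdM a f g x : derivable f x (ee R a) -> derivable g x (ee R a) ->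
  pd a (fun y => f y * g y) x = f x * pd a g x + g x * pd a f x.
Proof. exact: deriveM. Qed.

Lemma pdMl a (c : R) f x : derivable f x (ee R a) -> pd a (fun y => c * f y) x = c * pd a f x.
Proof. exact: deriveMl. Qed.

Lemma pd_cst a (c : R) x : pd a (fun=> c) x = 0.
Proof. exact: derive_cst. Qed.

Lemma pd_sum a (F : 'I_3 -> V -> R) x : (forall i, derivable (F i) x (ee R a)) ->
  pd a (fun y => \sum_(i < 3) F i y) x = \sum_(i < 3) pd a (F i) x.
Proof. by move=> dF; rewrite /pd -fct_sumE; exact: derive_sum. Qed.

End PartialDerivatives.

Section LaurentExpansion.
Variable X : 'I_3 -> V -> V.
Hypothesis X_smooth : forall i, vsmooth_on U (X i).
Hypothesis frame_unit : forall x, U x -> frameM X x \in unitmx.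

Definition coframe (y : V) := invmx (frameM X y).
Definition Xv (y : V) (i e : 'I_3) := X i y 0 e.
Definition Hv (y : V) (j e : 'I_3) := coframe y e j.
Definition theta (y : V) := Hv y 0.
Definition theta2 (y : V) (b d : 'I_3) := theta y b * theta y d.
Definition X0X0 (y : V) (c d : 'I_3) := X 0 y 0 c * X 0 y 0 d.

Definition koszul_at (F : V -> 'I_3 -> 'I_3 -> R) (y : V) :=
  koszul (fun a b d => pd a (fun z => F z b d) y).

Definition Gam1 (y : V) (c a b : 'I_3) :=
  2^-1 * \sum_(d < 3) hcomet (Xv y) c d * koszul_at theta2 y a b d.
Definition Gam0 (y : V) (c a b : 'I_3) := 2^-1 * \sum_(d < 3)
  (hcomet (Xv y) c d * koszul_at (fun z => hmet (Hv z)) y a b d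
   + X0X0 y c d * koszul_at theta2 y a b d).
Definition GamN (y : V) (c a b : 'I_3) :=
  2^-1 * \sum_(d < 3) X0X0 y c d * koszul_at (fun z => hmet (Hv z)) y a b d.

Lemma smooth_X i c : smooth_on U (fun y => X i y 0 c).
Proof. exact: X_smooth. Qed.

Lemma smooth_coframe a j : smooth_on U (fun y => coframe y a j).
Proof.
apply: (smooth_on_invmx frame_unit) => i k.
by apply: smooth_on_eq (smooth_X i k) _ => y _; rewrite mxE.
Qed.

Lemma smooth_theta a : smooth_on U (fun y => theta y a).
Proof. exact: smooth_coframe. Qed.

Lemma smooth_hmet b d : smooth_on U (fun y => hmet (Hv y) b d).
Proof. by apply: smooth_onD; apply: smooth_onM; exact: smooth_coframe. Qed.

Lemma smooth_theta2 b d : smooth_on U (fun y => theta2 y b d).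
Proof. by apply: smooth_onM; exact: smooth_theta. Qed.

Lemma smooth_hcomet c d : smooth_on U (fun y => hcomet (Xv y) c d).
Proof. by apply: smooth_onD; apply: smooth_onM; exact: smooth_X. Qed.

Lemma smooth_X0X0 c d : smooth_on U (fun y => X0X0 y c d).
Proof. by apply: smooth_onM; exact: smooth_X. Qed.

Lemma smooth_koszul_at (F : V -> 'I_3 -> 'I_3 -> R) :
  (forall b d, smooth_on U (fun y => F y b d)) ->
  forall a b d, smooth_on U (fun y => koszul_at F y a b d).
Proof. by move=> sF a b d; apply: smooth_onB; [apply: smooth_onD|]; apply: smooth_on_pd. Qed.

Lemma smooth_Gam1 c a b : smooth_on U (fun y => Gam1 y c a b).
Proof.
apply: smooth_onM; first exact: smooth_on_cst.
apply: smooth_on_big => [f g|d _]; first exact: smooth_onD.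
by apply: smooth_onM; [exact: smooth_hcomet|apply: smooth_koszul_at; exact: smooth_theta2].
Qed.

Lemma smooth_Gam0 c a b : smooth_on U (fun y => Gam0 y c a b).
Proof.
apply: smooth_onM; first exact: smooth_on_cst.
apply: smooth_on_big => [f g|d _]; first exact: smooth_onD.
apply: smooth_onD; apply: smooth_onM; try exact: smooth_hcomet; try exact: smooth_X0X0.
  by apply: smooth_koszul_at; exact: smooth_hmet.
by apply: smooth_koszul_at; exact: smooth_theta2.
Qed.

Lemma smooth_GamN c a b : smooth_on U (fun y => GamN y c a b).
Proof.
apply: smooth_onM; first exact: smooth_on_cst.
apply: smooth_on_big => [f g|d _]; first exact: smooth_onD.
by apply: smooth_onM; [exact: smooth_X0X0|apply: smooth_koszul_at; exact: smooth_hmet].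
Qed.

Lemma frame_coframe y i j : U y -> dot (Xv y i) (Hv y j) = (i == j)%:R.
Proof.
move=> Uy; have := congr1 (fun M : 'M[R]_3 => M i j) (mulmxV (frame_unit Uy)).
by rewrite /= !mxE => <-; apply: eq_bigr => e _; rewrite mxE.
Qed.

Definition epsrow (eps : R) : 'rV[R]_3 := \row_i (if i == 0 then eps else 1).

Lemma invmx_frameE eps y : eps != 0 -> U y ->
  invmx (frameE X eps y) = coframe y *m diag_mx (epsrow eps^-1).
Proof.
move=> eps0 Uy.
have frameE_diag : frameE X eps y = diag_mx (epsrow eps) *m frameM X y.
  by apply/matrixP => i j; rewrite mul_diag_mx !mxE.
have inv : frameE X eps y *m (coframe y *m diag_mx (epsrow eps^-1)) = 1%:M.
  rewrite frameE_diag -mulmxA (mulmxA (frameM X y)) mulmxV ?frame_unit // mul1mx.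
  apply/matrixP => i j; rewrite mul_diag_mx !mxE.
  have [->|ij] := eqVneq i j; last by rewrite mulr0n mulr0.
  by rewrite ?eqxx !mulr1n; case: ifP => _; [rewrite mulfV|rewrite mulr1].
have [unitE _] := mulmx1_unit inv.
by rewrite -[invmx _]mulmx1 -inv mulmxA mulVmx // mul1mx.
Qed.

Lemma Gm_laurent eps y b d : eps != 0 -> U y ->
  Gm X eps y b d = hmet (Hv y) b d + (eps ^+ 2)^-1 * theta2 y b d.
Proof.
move=> eps0 Uy; rewrite /Gm invmx_frameE // mul_mx_diag !mxE sum3E !mxE /=.
by rewrite /hmet /theta2 /theta /Hv -exprVn; ring.
Qed.

Lemma Ginv_laurent eps y c d :
  Ginv X eps y c d = hcomet (Xv y) c d + eps ^+ 2 * X0X0 y c d.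
Proof. by rewrite /Ginv !mxE sum3E !mxE /= /hcomet /X0X0 /Xv; ring. Qed.

Lemma koszul_Gm_laurent eps y a b d : eps != 0 -> U y ->
  pd a (fun z => Gm X eps z b d) y + pd b (fun z => Gm X eps z a d) y
    - pd d (fun z => Gm X eps z a b) y =
  koszul_at (fun z => hmet (Hv z)) y a b d + (eps ^+ 2)^-1 * koszul_at theta2 y a b d.
Proof.
move=> eps0 Uy.
have pdGm a' b' d' : pd a' (fun z => Gm X eps z b' d') y =
    pd a' (fun z => hmet (Hv z) b' d') y + (eps ^+ 2)^-1 * pd a' (fun z => theta2 z b' d') y.
  rewrite (pd_eq_on _ Uy (fun z Uz => Gm_laurent b' d' eps0 Uz)).
  rewrite pdD ?pdMl //; do ?apply: smooth_on_derivable Uy.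
  - exact: smooth_theta2.
  - exact: smooth_hmet.
  - by apply: smooth_onM; [exact: smooth_on_cst|exact: smooth_theta2].
by rewrite !pdGm /koszul_at /koszul; ring.
Qed.

Lemma Gam_laurent eps y c a b : eps != 0 -> U y ->
  Gam X eps c a b y = (eps ^+ 2)^-1 * Gam1 y c a b + Gam0 y c a b + eps ^+ 2 * GamN y c a b.
Proof.
move=> eps0 Uy.
have st : eps ^+ 2 * (eps ^+ 2)^-1 = 1 by rewrite mulfV // expf_neq0.
rewrite /Gam /Gam1 /Gam0 /GamN !mulr_sumr -!big_split; apply: eq_bigr => d _ /=.
rewrite koszul_Gm_laurent // Ginv_laurent.
move: (hcomet _ c d) (X0X0 y c d) (koszul_at _ y a b d) (koszul_at theta2 y a b d) => P Q LA LB.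
by rewrite -[Q * LB]mul1r -st; ring.
Qed.

Lemma pd_Gam_laurent eps x c a b y : eps != 0 -> U y ->
  pd x (Gam X eps c a b) y = (eps ^+ 2)^-1 * pd x (fun z => Gam1 z c a b) y
    + pd x (fun z => Gam0 z c a b) y + eps ^+ 2 * pd x (fun z => GamN z c a b) y.
Proof.
move=> eps0 Uy.
rewrite (pd_eq_on _ Uy (fun z Uz => Gam_laurent c a b eps0 Uz)).
have d1 : derivable (fun z => Gam1 z c a b) y (ee R x) :=
  smooth_on_derivable (smooth_Gam1 c a b) Uy.
have d0 : derivable (fun z => Gam0 z c a b) y (ee R x) :=
  smooth_on_derivable (smooth_Gam0 c a b) Uy.
have dN : derivable (fun z => GamN z c a b) y (ee R x) :=
  smooth_on_derivable (smooth_GamN c a b) Uy.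
have dsd1 : derivable (fun z => (eps ^+ 2)^-1 * Gam1 z c a b) y (ee R x) :=
  smooth_on_derivable (smooth_onM (smooth_on_cst _) (smooth_Gam1 c a b)) Uy.
have dtdN : derivable (fun z => eps ^+ 2 * GamN z c a b) y (ee R x) :=
  smooth_on_derivable (smooth_onM (smooth_on_cst _) (smooth_GamN c a b)) Uy.
rewrite pdD; [|exact: derivableD dsd1 d0|exact: dtdN].
by rewrite (pdD dsd1 d0) (pdMl _ d1) (pdMl _ dN).
Qed.

Lemma Rm_laurent eps y : eps != 0 -> U y ->
  (fun d a b c => Rm X eps d a b c y) = (fun d a b c =>
    ((eps ^+ 2)^-1) ^+ 2 * quad (Gam1 y) (Gam1 y) d a b c
    + (eps ^+ 2)^-1 * (riem_lin (fun x c a b => pd x (fun z => Gam1 z c a b) y) d a b c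
                       + quad (Gam1 y) (Gam0 y) d a b c + quad (Gam0 y) (Gam1 y) d a b c)
    + (riem_lin (fun x c a b => pd x (fun z => Gam0 z c a b) y) d a b c
       + quad (Gam0 y) (Gam0 y) d a b c + quad (Gam1 y) (GamN y) d a b c
       + quad (GamN y) (Gam1 y) d a b c)
    + eps ^+ 2 * (riem_lin (fun x c a b => pd x (fun z => GamN z c a b) y) d a b c
                  + quad (Gam0 y) (GamN y) d a b c + quad (GamN y) (Gam0 y) d a b c)
    + (eps ^+ 2) ^+ 2 * quad (GamN y) (GamN y) d a b c).
Proof.
move=> eps0 Uy.
have st : (eps ^+ 2)^-1 * eps ^+ 2 = 1 by rewrite mulVf // expf_neq0.
have GamE : (fun c a b => Gam X eps c a b y) = (fun c a b => (eps ^+ 2)^-1 * Gam1 y c a b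
    + Gam0 y c a b + eps ^+ 2 * GamN y c a b).
  by apply/funext => c; apply/funext => a; apply/funext => b; exact: Gam_laurent.
have pdGamE : (fun x c a b => pd x (Gam X eps c a b) y) = (fun x c a b =>
    (eps ^+ 2)^-1 * pd x (fun z => Gam1 z c a b) y + pd x (fun z => Gam0 z c a b) y
    + eps ^+ 2 * pd x (fun z => GamN z c a b) y).
  apply/funext => x; apply/funext => c; apply/funext => a; apply/funext => b.
  exact: pd_Gam_laurent.
apply/funext => d; apply/funext => a; apply/funext => b; apply/funext => c.
by rewrite -(riem_laurent _ _ _ _ _ _ _ _ _ _ st); cbv zeta; rewrite -GamE -pdGamE.
Qed.

Definition dtheta (y : V) (a c : 'I_3) := pd a (fun z => theta z c) y.
Definition ddtheta (y : V) (x a c : 'I_3) := pd x (fun z => dtheta z a c) y.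

Lemma pd_theta2 y a b f : U y ->
  pd a (fun z => theta2 z b f) y = dB (theta y) (dtheta y) a b f.
Proof.
move=> Uy; have dth c : derivable (fun z => theta z c) y (ee R a).
  exact: smooth_on_derivable (smooth_theta c) Uy.
rewrite /theta2 (pdM (dth b) (dth f)).
by rewrite /dB /dtheta; ring.
Qed.

Lemma koszul_theta2 y a b f : U y ->
  koszul_at theta2 y a b f = koszul (dB (theta y) (dtheta y)) a b f.
Proof. by move=> Uy; rewrite /koszul_at /koszul !pd_theta2. Qed.

Section AtPoint.
Variable p : V.
Hypothesis Up : U p.

Lemma pd_koszul_theta2 x a b f :
  pd x (fun y => koszul_at theta2 y a b f) p =
  koszul (ddB (theta p) (dtheta p) (ddtheta p) x) a b f.
Proof.
have ddB_at a' b' f' : pd x (fun y => pd a' (fun z => theta2 z b' f') y) p =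
    ddB (theta p) (dtheta p) (ddtheta p) x a' b' f'.
  rewrite (pd_eq_on _ Up (fun y Uy => pd_theta2 a' b' f' Uy)) /dB.
  have dth c : derivable (fun y => dtheta y a' c) p (ee R x).
    exact: smooth_on_derivable (smooth_on_pd _ (smooth_theta c)) Up.
  have th c : derivable (fun y => theta y c) p (ee R x).
    exact: smooth_on_derivable (smooth_theta c) Up.
  rewrite (pdD (derivableM (dth b') (th f')) (derivableM (th b') (dth f'))).
  rewrite (pdM (dth b') (th f')) (pdM (th b') (dth f')).
  (* [ring] on the goal itself would compare the derivative atoms up to conversion,
     which is very slow. *)
  have reorder (A B C D E F G H : R) :
    A * B + C * D + (E * F + G * H) = D * C + A * B + H * G + E * F by ring.
  exact: reorder.
have d a' b' f' : derivable (fun y => pd a' (fun z => theta2 z b' f') y) p (ee R x).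
  exact: smooth_on_derivable (smooth_on_pd _ (smooth_theta2 _ _)) Up.
by rewrite /koszul_at /koszul pdB ?pdD //; [rewrite !ddB_at|exact: derivableD].
Qed.

Lemma Gam1E c a b : Gam1 p c a b =
  2^-1 * \sum_(f < 3) hcomet (Xv p) c f * koszul (dB (theta p) (dtheta p)) a b f.
Proof. by congr (_ * _); apply: eq_bigr => f _; rewrite koszul_theta2. Qed.

Lemma pd_Gam1E x c a b : pd x (fun y => Gam1 y c a b) p =
  2^-1 * \sum_(f < 3) (pd x (fun y => hcomet (Xv y) c f) p * koszul (dB (theta p) (dtheta p)) a b f
    + hcomet (Xv p) c f * koszul (ddB (theta p) (dtheta p) (ddtheta p) x) a b f).
Proof.
have sP f := smooth_hcomet c f.
have sK f := smooth_koszul_at smooth_theta2 a b f.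
rewrite pdMl; last first.
  apply: smooth_on_derivable Up; apply: smooth_on_big => [g h|f _]; first exact: smooth_onD.
  exact: smooth_onM.
congr (_ * _); rewrite pd_sum => [|f]; last exact: smooth_on_derivable (smooth_onM (sP f) (sK f)) Up.
apply: eq_bigr => f _.
rewrite (pdM (smooth_on_derivable (sP f) Up) (smooth_on_derivable (sK f) Up)).
by rewrite pd_koszul_theta2 koszul_theta2 // addrC mulrC.
Qed.

Lemma frame_coframe_p i j : dot (Xv p i) (Hv p j) = (i == j)%:R.
Proof. exact: frame_coframe. Qed.

Lemma theta_Gam0 a b : \sum_(e < 3) theta p e * Gam0 p e a b =
  2^-1 * \sum_(f < 3) X 0 p 0 f * koszul (dB (theta p) (dtheta p)) a b f.
Proof.
rewrite /Gam0 /X0X0 (H0_hcomet_X0 frame_coframe_p); congr (_ * _).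
by apply: eq_bigr => f _; rewrite koszul_theta2.
Qed.

Lemma pd_duality i x : \sum_(f < 3) (X i p 0 f * dtheta p x f
    + theta p f * pd x (fun y => X i y 0 f) p) = 0.
Proof.
have sXth f : smooth_on U (fun y => X i y 0 f * theta y f).
  exact: smooth_onM (smooth_X i f) (smooth_theta f).
have pd_dual : pd x (fun y => \sum_(f < 3) X i y 0 f * theta y f) p = 0.
  rewrite (pd_eq_on _ Up (fun y Uy => frame_coframe i 0 Uy)); exact: pd_cst.
rewrite -[RHS]pd_dual pd_sum => [|f]; last exact: smooth_on_derivable (sXth f) Up.
apply: eq_bigr => f _.
rewrite (pdM (smooth_on_derivable (smooth_X i f) Up) (smooth_on_derivable (smooth_theta f) Up)).
by rewrite /dtheta; ring.
Qed.

Lemma pd_hcomet_theta x c : \sum_(f < 3) pd x (fun y => hcomet (Xv y) c f) p * theta p f =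
  - \sum_(f < 3) hcomet (Xv p) c f * dtheta p x f.
Proof.
rewrite -(hcomet_derivative_H0 frame_coframe_p _ (pd_duality 1 x) (pd_duality 2 x)).
apply: eq_bigr => f _; congr (_ * _).
have d i k : derivable (fun y => X i y 0 k) p (ee R x).
  exact: smooth_on_derivable (smooth_X i k) Up.
rewrite /hcomet /Xv (pdD (derivableM (d 1 c) (d 1 f)) (derivableM (d 2 c) (d 2 f))).
by rewrite (pdM (d 1 c) (d 1 f)) (pdM (d 2 c) (d 2 f)).
Qed.

Variables (u v : V) (s1 t1 s2 t2 : R).
Hypothesis u_span : u = s1 *: X 1 p + t1 *: X 2 p.
Hypothesis v_span : v = s2 *: X 1 p + t2 *: X 2 p.

Let u_spanE e : u 0 e = s1 * Xv p 1 e + t1 * Xv p 2 e.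
Proof. by rewrite u_span !mxE. Qed.
Let v_spanE e : v 0 e = s2 * Xv p 1 e + t2 * Xv p 2 e.
Proof. by rewrite v_span !mxE. Qed.

Lemma gdot_span eps (x y : V) a1 b1 a2 b2 : eps != 0 ->
  x = a1 *: X 1 p + b1 *: X 2 p -> y = a2 *: X 1 p + b2 *: X 2 p ->
  gdot X eps p x y = a1 * a2 + b1 * b2.
Proof.
move=> eps0 hx hy; rewrite /gdot !mxE.
rewrite -(hmet_span frame_coframe_p (u := fun e => x 0 e) (v := fun e => y 0 e)
  _ _ ((eps ^+ 2)^-1)); last 2 first.
- by move=> e; rewrite hx !mxE.
- by move=> e; rewrite hy !mxE.
apply: eq_bigr => k _; rewrite !mxE; congr (_ * _); apply: eq_bigr => j _.
by rewrite Gm_laurent.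
Qed.

Lemma cstruct_dtheta : cstruct X 0 1 2 p =
  bform (dtheta p) (Xv p 1) (Xv p 2) - bform (dtheta p) (Xv p 2) (Xv p 1).
Proof.
rewrite -(bracket_H0 (pd_duality 1) (pd_duality 2)) /cstruct mxE.
by apply: eq_bigr => k _; rewrite mxE.
Qed.

Let w (d : 'I_3) := \sum_(e < 3) hmet (Hv p) d e * u 0 e.

Lemma theta_u : dot (theta p) (fun e => u 0 e) = 0.
Proof. exact: (H0_span (u := fun e => u 0 e) frame_coframe_p u_spanE). Qed.

Lemma theta_v : dot (theta p) (fun e => v 0 e) = 0.
Proof. exact: (H0_span (u := fun e => v 0 e) frame_coframe_p v_spanE). Qed.

Lemma Kext_numerator eps : eps != 0 ->
  \sum_(a < 3) \sum_(b < 3) \sum_(c < 3) \sum_(d < 3) \sum_(e < 3)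
     u 0 a * v 0 b * v 0 c * Rm X eps d a b c p * Gm X eps p d e * u 0 e =
  curv_form (fun e => u 0 e) (fun e => v 0 e) w (fun d a b c => Rm X eps d a b c p).
Proof.
move=> eps0; apply: eq_bigr => a _; apply: eq_bigr => b _; apply: eq_bigr => c _.
apply: eq_bigr => d _; rewrite /w mulr_sumr; under eq_bigr => e _ do rewrite Gm_laurent //.
have -> : \sum_(e < 3) u 0 a * v 0 b * v 0 c * Rm X eps d a b c p *
    (hmet (Hv p) d e + (eps ^+ 2)^-1 * theta2 p d e) * u 0 e =
  \sum_(e < 3) u 0 a * v 0 b * v 0 c * Rm X eps d a b c p * (hmet (Hv p) d e * u 0 e)
  + u 0 a * v 0 b * v 0 c * Rm X eps d a b c p * (eps ^+ 2)^-1 * theta p d *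
    dot (theta p) (fun e => u 0 e).
  by rewrite /theta2 /dot !sum3E; ring.
by rewrite theta_u mulr0 addr0.
Qed.

Lemma X0_theta : dot (Xv p 0) (theta p) = 1.
Proof. by rewrite frame_coframe_p. Qed.

Lemma Kext_laurent : exists n0 n1 n2 : R, forall eps, eps != 0 ->
  Kext X eps p u v =
    ((eps ^+ 2)^-1 * (- (3 / 4) * ((s1 * t2 - t1 * s2) * cstruct X 0 1 2 p) ^+ 2)
     + n0 + eps ^+ 2 * n1 + (eps ^+ 2) ^+ 2 * n2) / (s1 * t2 - t1 * s2) ^+ 2.
Proof.
pose cf := curv_form (fun e => u 0 e) (fun e => v 0 e) w.
pose pdGam (G : V -> 'I_3 -> 'I_3 -> 'I_3 -> R) x c a b := pd x (fun z => G z c a b) p.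
exists (cf (fun d a b c => riem_lin (pdGam Gam0) d a b c + quad (Gam0 p) (Gam0 p) d a b c
          + quad (Gam1 p) (GamN p) d a b c + quad (GamN p) (Gam1 p) d a b c)).
exists (cf (fun d a b c => riem_lin (pdGam GamN) d a b c + quad (Gam0 p) (GamN p) d a b c
          + quad (GamN p) (Gam0 p) d a b c)).
exists (cf (quad (GamN p) (GamN p))) => eps eps0.
rewrite /Kext (gdot_span eps0 u_span u_span) (gdot_span eps0 v_span v_span).
rewrite (gdot_span eps0 u_span v_span) Kext_numerator //.
have -> : (s1 * s1 + t1 * t1) * (s2 * s2 + t2 * t2) - (s1 * s2 + t1 * t2) ^+ 2 =
  (s1 * t2 - t1 * s2) ^+ 2 by ring.
congr (_ / _).
rewrite Rm_laurent // curv_form_laurent.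
rewrite (curv_form_quad_G1 w Gam1E theta_u theta_v (hcomet_H0 frame_coframe_p)) mulr0 add0r.
rewrite (curv_form_riem1 Gam1E pd_Gam1E theta_Gam0 theta_u theta_v (hcomet_H0 frame_coframe_p)
  pd_hcomet_theta (hmet_hcomet_span frame_coframe_p u_spanE) X0_theta).
by rewrite (bform_alt_span _ u_spanE v_spanE) -cstruct_dtheta.
Qed.

End AtPoint.

End LaurentExpansion.

End Calculus.

Theorem lemma3p2 (R : realType) (U : set 'rV[R]_3) (X : 'I_3 -> 'rV[R]_3 -> 'rV[R]_3)
  (S : set 'rV[R]_3) (p : 'rV[R]_3) :
  open U -> U p ->
  (forall i, vsmooth_on U (X i)) ->
  (* X_0 transverse to D = span(X_1,X_2), (X_1,X_2) a frame of D *)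
  (forall x, U x -> frameM X x \in unitmx) ->
  (* contact condition: [X_1,X_2] is not in D *)
  (forall x, U x -> ~ distr X x (lie (X 1) (X 2) x)) ->
  C2_surface S -> S p ->
  (* p is characteristic *)
  tangent_space S p = distr X p ->
  forall u v : 'rV[R]_3,
    tangent_space S p u -> tangent_space S p v ->
    (forall s t : R, s *: u + t *: v = 0 -> s = 0 /\ t = 0) ->
    exists C delta : R, 0 < delta /\
      forall eps : R, 0 < eps -> eps < delta ->
        `| Kext X eps p u v + 3 / (4 * eps ^+ 2) * (cstruct X 0 1 2 p) ^+ 2 | <= C.
Proof.
move=> oU Up X_smooth frame_unit _ _ _ characteristic u v Tu Tv indep.
have [s1 [t1 u_span]] : distr X p u by rewrite -characteristic.
have [s2 [t2 v_span]] : distr X p v by rewrite -characteristic.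
have [n0 [n1 [n2 KextE]]] := Kext_laurent oU X_smooth frame_unit Up u_span v_span.
exists ((`|n0| + `|n1| + `|n2|) / (s1 * t2 - t1 * s2) ^+ 2), 1.
split=> // eps eps_gt0 eps_lt1; rewrite KextE ?gt_eqF //.
exact: laurent_remainder_le (span_det_neq0 u_span v_span indep) eps_gt0 eps_lt1.
Qed.
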